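(* Let $\alpha\in(0,1)$. For any distribution functions $F,G$ on $\mathbb R$, $$|\mathrm{VaR}_\alpha(F)-\mathrm{VaR}_\alpha(G)|\le\frac{2\|F\|+\|F-G\|}{\min\{\alpha,1-\alpha\}},$$ where $\|F\|=\max\{\|F\|_\infty,|\int_{-\infty}^0x\,dF(x)|,|\int_0^\infty x\,dF(x)|\}$.
   Context: $\|F\|_\infty=\sup_x|F(x)|$; integrals are Lebesgue–Stieltjes integrals (the norm may be $+\infty$, in which case the inequality is trivial). $\mathrm{VaR}_\alpha(F)=\inf\{y\in\mathbb R:F(y)\ge\alpha\}$. *)

From HB Require Import structures.
From mathcomp Require Import all_boot all_order all_algebra.
From mathcomp Require Import all_classical all_reals all_analysis.
Set Implicit Arguments. Unset Strict Implicit. Unset Printing Implicit Defensive.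
Import Order.TTheory GRing.Theory Num.Theory.
Import numFieldNormedType.Exports.
Local Open Scope classical_set_scope.
Local Open Scope ring_scope.
Local Open Scope ereal_scope.

Notation distribution_function R := (cumulativeBounded (0:R) (1:R)).

Definition VaR {R : realType} (alpha : R) (F : distribution_function R) : R :=
  inf [set y : R | (alpha <= F y)%R].

Definition LS_int_id {R : realType} (F : distribution_function R) (D : set R)
  : \bar R :=
  \int[lebesgue_stieltjes_measure F]_(x in (D : set (measurableTypeR R))) x%:E.

Definition sup_norm_diff {R : realType} (F G : R -> R) : \bar R :=
  ereal_sup (range (fun x => (`|F x - G x|)%:E)).

Definition dnorm {R : realType} (F : distribution_function R) : \bar R :=
  maxe (sup_norm_diff F (fun _ => 0%R))
    (maxe `|LS_int_id F `]-oo, 0%R]%classic| `|LS_int_id F `[0%R, +oo[%classic|).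

(* Integral of x over D against d(F - G): the difference of the two
   integrals when both are finite; +oo (the norm is infinite) otherwise. *)
Definition LS_int_id_diff {R : realType} (F G : distribution_function R)
  (D : set R) : \bar R :=
  if (LS_int_id F D \is a fin_num) && (LS_int_id G D \is a fin_num)
  then LS_int_id F D - LS_int_id G D else +oo.

Definition dnorm_diff {R : realType} (F G : distribution_function R) : \bar R :=
  maxe (sup_norm_diff F G)
    (maxe `|LS_int_id_diff F G `]-oo, 0%R]%classic| `|LS_int_id_diff F G `[0%R, +oo[%classic|).

(* Write m = min(alpha, 1 - alpha) and M(F) for the larger of |int_{x<=0} x dF| and
   |int_{x>=0} x dF|.  For q = VaR_alpha(F): if q <= 0, then F(q) >= alpha, so
   |int_{x<=0} x dF| >= -q F(q) >= m |q|; if q > 0, then F(y) < alpha for y < q, so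
   int_{x>=0} x dF >= y (1 - F(y)) >= y (1 - alpha), and letting y increase to q gives
   m |q| <= M(F).  Hence m |VaR_alpha(F) - VaR_alpha(G)| <= M(F) + M(G), and
   M(G) <= M(F) + M(F - G) by the triangle inequality. *)

From HB Require Import structures.
From mathcomp Require Import all_boot all_order all_algebra.
From mathcomp Require Import all_classical all_reals all_analysis.
From mathcomp Require Import lra measurable_realfun.
Import Order.TTheory GRing.Theory Num.Theory.
Local Open Scope ring_scope.
Local Open Scope classical_set_scope.

Section lebesgue_stieltjes_intervals.
Context {R : realType}.

Lemma lebesgue_stieltjes_measure_itvNyc {l r : R} (f : cumulativeBounded l r) x :
  lebesgue_stieltjes_measure f `]-oo, x] = (f x - l)%:E.
Proof.
pose mu := lebesgue_stieltjes_measure f.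
have mu_itv_oc n : - n%:R <= x -> mu `]- n%:R, x] = ((f x)%:E - (f (- n%:R))%:E)%E.
  move=> xn; rewrite /mu /lebesgue_stieltjes_measure /measure_extension /=.
  by rewrite measurable_mu_extE /= ?wlength_itv_bnd //; exact: is_ocitv.
have : mu `]- n%:R, x] @[n --> \oo] --> (f x - l)%:E.
  suff : ((f x)%:E - (f (- n%:R))%:E)%E @[n --> \oo] --> (f x - l)%:E.
    apply: cvg_trans; apply: near_eq_cvg; near=> n; rewrite mu_itv_oc //.
    by rewrite lerNl; near: n; exact: nbhs_infty_ger.
  rewrite EFinB; apply: (cvgeB _ (cvg_cst _)) => //.
  apply: (cvg_comp _ _ (cvg_comp _ _ _ (cumulativeNy f))) => //.
  by apply: (cvg_comp _ _ cvgr_idn); rewrite ninfty.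
have : mu `]- n%:R, x] @[n --> \oo] --> mu (\bigcup_n `]- n%:R, x]).
  apply: nondecreasing_cvg_mu => //; first exact: bigcup_measurable.
  by move=> *; apply/subsetPset/subset_itv; rewrite leBSide //= lerN2 ler_nat.
by rewrite -itvNybndEbigcup; exact: cvg_unique.
Unshelve. all: by end_near. Qed.

Lemma lebesgue_stieltjes_measure_itvoy (F : distribution_function R) x :
  lebesgue_stieltjes_measure F `]x, +oo[ = (1 - F x)%:E.
Proof.
rewrite -setCitvl probability_setC //.
by rewrite [X in (1 - X)%E](lebesgue_stieltjes_measure_itvNyc F x) subr0 EFinB.
Qed.

End lebesgue_stieltjes_intervals.

Local Open Scope ereal_scope.

Lemma ge0_cst_mul_measure_le_integral {R : realType} d (T : measurableType d)
    (mu : {measure set T -> \bar R}) (A D : set T) (c : R) (g : T -> \bar R) :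
  measurable A -> measurable D -> A `<=` D ->
  measurable_fun D g -> (forall x, D x -> 0 <= g x) ->
  (0 <= c)%R -> (forall x, A x -> c%:E <= g x) ->
  c%:E * mu A <= \int[mu]_(x in D) g x.
Proof.
move=> mA mD AD mg g0 c0 cg; rewrite -integral_cst //.
apply: le_trans (ge0_subset_integral mu mA mD mg g0 AD).
apply: ge0_le_integral => //.
exact: measurable_funS mg.
Qed.

Section LS_int_id_bounds.
Context {R : realType} (F : distribution_function R).

Lemma mul_tail_le_LS_int_id_itvcy (y : R) : (0 <= y)%R ->
  (y * (1 - F y))%:E <= LS_int_id F `[0%R, +oo[.
Proof.
move=> y0; rewrite EFinM -lebesgue_stieltjes_measure_itvoy.
apply: ge0_cst_mul_measure_le_integral => //.
- by move=> x /=; rewrite !in_itv /= !andbT => /ltW; apply: le_trans.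
- by move=> x /=; rewrite in_itv /= andbT lee_fin.
- by move=> x /=; rewrite in_itv /= andbT lee_fin => /ltW.
Qed.

Lemma mul_cdf_le_abse_LS_int_id_itvNyc (y : R) : (y <= 0)%R ->
  (- y * F y)%:E <= `|LS_int_id F `]-oo, 0%R]|.
Proof.
move=> y0; have x_le0 (x : measurableTypeR R) : `]-oo, 0%R] x -> 0 <= (- x)%:E.
  by rewrite /= in_itv /= lee_fin oppr_ge0.
rewrite /LS_int_id (eq_integral (fun x : measurableTypeR R => - (- x)%:E)); last first.
  by move=> x _; rewrite EFinN oppeK.
rewrite integral_ge0N // abseN gee0_abs; last exact: integral_ge0.
rewrite EFinM -[F y]subr0 -lebesgue_stieltjes_measure_itvNyc.
apply: ge0_cst_mul_measure_le_integral => //.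
- by move=> x /=; rewrite !in_itv /= => /le_trans; apply.
- exact/measurable_EFinP/measurable_funTS/measurable_funN/measurable_id.
- by rewrite oppr_ge0.
- by move=> x /=; rewrite in_itv /= lee_fin => xy; rewrite lerN2.
Qed.

End LS_int_id_bounds.

Definition partial_moment_norm {R : realType} (F : distribution_function R) :=
  maxe `|LS_int_id F `]-oo, 0%R]| `|LS_int_id F `[0%R, +oo[|.

Definition partial_moment_norm_diff {R : realType} (F G : distribution_function R) :=
  maxe `|LS_int_id_diff F G `]-oo, 0%R]| `|LS_int_id_diff F G `[0%R, +oo[|.

Section partial_moment_norms.
Context {R : realType} (F G : distribution_function R).

Lemma partial_moment_norm_le_dnorm : partial_moment_norm F <= dnorm F.
Proof. by rewrite /dnorm le_max lexx orbT. Qed.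

Lemma partial_moment_norm_diff_le_dnorm_diff :
  partial_moment_norm_diff F G <= dnorm_diff F G.
Proof. by rewrite /dnorm_diff le_max lexx orbT. Qed.

Lemma abse_LS_int_id_le_diff (D : set R) :
  `|LS_int_id G D| <= `|LS_int_id F D| + `|LS_int_id_diff F G D|.
Proof.
rewrite /LS_int_id_diff; case: ifPn => [/andP[]|_]; last first.
  by rewrite /= addey ?leey // gt_eqF // (lt_le_trans _ (abse_ge0 _)) // ltNy0.
case: (LS_int_id F D) => // r _; case: (LS_int_id G D) => // s _.
by rewrite /= -EFinD lee_fin -[X in (`|X| <= _)%R](subKr r) ler_normB.
Qed.

Lemma partial_moment_norm_le_add_diff :
  partial_moment_norm G <= partial_moment_norm F + partial_moment_norm_diff F G.
Proof.
rewrite ge_max; apply/andP; split; apply: le_trans (abse_LS_int_id_le_diff _) _;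
  by apply: leeD; rewrite le_max lexx ?orbT.
Qed.

End partial_moment_norms.

Section value_at_risk.
Local Open Scope ring_scope.
Context {R : realType} (alpha : R) (F : distribution_function R).
Hypotheses (alpha_gt0 : 0 < alpha) (alpha_lt1 : alpha < 1).

Let quantile_set := [set y : R | alpha <= F y].

Let quantile_set_neq0 : quantile_set !=set0.
Proof.
have [M [_ HM]] := cvgr_gt _ (cumulativey F) _ alpha_lt1.
by exists (M + 1); apply/ltW/HM; lra.
Qed.

Let quantile_set_has_lbound : has_lbound quantile_set.
Proof.
have [M [_ HM]] := cvgr_lt _ (cumulativeNy F) _ alpha_gt0.
exists M => y Fy; rewrite leNgt; apply/negP => /HM; rewrite /quantile_set /= in Fy; lra.
Qed.

Lemma cdf_lt_of_lt_VaR y : y < VaR alpha F -> F y < alpha.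
Proof.
rewrite ltNge; apply: contraNlt => Fy.
exact: ge_inf quantile_set_has_lbound _ Fy.
Qed.

Lemma cdf_VaR_ge : alpha <= F (VaR alpha F).
Proof.
set a := VaR alpha F; rewrite leNgt; apply/negP => Fa.
have [e /= e_gt0 Fa_e] := cvgr_lt _ (cumulative_is_right_continuous F a) _ Fa.
have [z /= Fz za] := inf_adherent e_gt0 (conj quantile_set_neq0 quantile_set_has_lbound).
have az : a <= z by exact: ge_inf quantile_set_has_lbound _ Fz.
(* [w] is right of [a] within distance [e], and above the point [z] of the quantile set. *)
pose w := (z + (a + e)) / 2.
have : alpha <= F w by apply: le_trans Fz _; apply: cumulative_is_nondecreasing; rewrite /w; lra.
have : F w < alpha.
  apply: Fa_e; last by rewrite /w; lra.
  by rewrite /ball_ /= ltr_norml /w; apply/andP; split; lra.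
lra.
Qed.

Lemma VaR_abs_mul_min_le :
  ((`|VaR alpha F| * Num.min alpha (1 - alpha))%:E <= partial_moment_norm F)%E.
Proof.
set a := VaR alpha F; set m := Num.min alpha (1 - alpha).
have [m_le_alpha m_le_1Ba] : m <= alpha /\ m <= 1 - alpha.
  by split; rewrite ge_min lexx ?orbT.
have [a_le0|a_gt0] := leP a 0.
  apply: le_trans (_ : (- a * F a)%:E <= _)%E; last first.
    by rewrite /partial_moment_norm le_max mul_cdf_le_abse_LS_int_id_itvNyc.
  by rewrite lee_fin ler0_norm //; have := cdf_VaR_ge; nra.
(* Bound [r a (1 - alpha)] for every [r] in (0, 1), using [y = r a < a]. *)
apply: le_trans (_ : (a * (1 - alpha))%:E <= _)%E.
  by rewrite lee_fin gtr0_norm //; nra.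
apply: le_trans (_ : LS_int_id F `[0%R, +oo[%classic <= _)%E; last first.
  by rewrite /partial_moment_norm le_max lee_abs orbT.
apply/lee_mul01Pr; first by rewrite lee_fin mulr_ge0 // ?subr_ge0 ltW.
move=> r /andP[r_gt0 r_lt1]; rewrite -EFinM mulrA.
have ra_ge0 : 0 <= r * a by rewrite mulr_ge0 // ltW.
apply: le_trans (mul_tail_le_LS_int_id_itvcy F _ ra_ge0); rewrite lee_fin.
have : F (r * a) < alpha by apply: cdf_lt_of_lt_VaR; rewrite -/a; nra.
nra.
Qed.

End value_at_risk.

Theorem lemma30 (R : realType) (alpha : R)
  (halpha : (0 < alpha < 1)%R) (F G : distribution_function R) :
  (`| VaR alpha F - VaR alpha G |)%:E <=
    (2%:E * dnorm F + dnorm_diff F G) * ((Num.min alpha (1 - alpha))^-1)%:E.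
Proof.
have [alpha_gt0 alpha_lt1] := andP halpha.
set m := Num.min alpha (1 - alpha)%R.
have m_gt0 : (0 < m)%R by rewrite lt_min alpha_gt0 subr_gt0.
rewrite lee_pdivlMr // -EFinM.
apply: le_trans (_ : (`|VaR alpha F| * m)%:E + (`|VaR alpha G| * m)%:E <= _).
  by rewrite -EFinD lee_fin -mulrDl ler_wpM2r ?(ltW m_gt0) ?ler_normB.
rewrite mule_natl mule2n -addeA; apply: leeD.
  exact: le_trans (VaR_abs_mul_min_le _ F alpha_gt0 alpha_lt1)
    (partial_moment_norm_le_dnorm F).
apply: le_trans (VaR_abs_mul_min_le _ G alpha_gt0 alpha_lt1) _.
apply: le_trans (partial_moment_norm_le_add_diff F G) _.
apply: leeD; first exact: partial_moment_norm_le_dnorm.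
exact: partial_moment_norm_diff_le_dnorm_diff.
Qed.
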